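(* Let $(S,\curlyvee)$ be an algebra with one binary operation. Then $(S,\curlyvee)$ is functional (isomorphic to a set of partial functions closed under restricted union, with $\curlyvee$ interpreted as restricted union) if and only if $(S,\curlyvee)$ is a $\curlyvee$-algebra. Moreover, the class of $\curlyvee$-algebras consists of (algebras isomorphic to) subdirect products of flat $\curlyvee$-algebras.
   Context: For sets $X,Y$, $\mathrm{Par}(X,Y)$ is the set of partial functions from $X$ to $Y$, viewed as sets of ordered pairs. For $f,g\in\mathrm{Par}(X,Y)$ let $g-f$ denote the restriction of $g$ to $X\setminus\mathrm{dom}(f)$. Restricted union is $f\curlyvee g=(f-g)\cup(f\cap g)\cup(g-f)$ (the restriction of the relation $f\cup g$ to the points where it is single-valued). An algebra $(S,\curlyvee)$ is functional if it is isomorphic to $(A,\curlyvee)$ for some $A\subseteq\mathrm{Par}(X,Y)$ closed under $\curlyvee$, for some sets $X,Y$. A left regular band is a set with a binary operation $\sqcup$ satisfying $a\sqcup(b\sqcup c)=(a\sqcup b)\sqcup c$, $a\sqcup a=a$, $a\sqcup b=(a\sqcup b)\sqcup a$. On an algebra with operation $\sqcup$ write $a\lesssim b$ iff $b\sqcup a=b$. A $\curlyvee$-algebra is an algebra $(S,\curlyvee)$ such that, defining $a\sqcup b=a\curlyvee(a\curlyvee b)$ for all $a,b\in S$: $(S,\sqcup)$ is a left regular band; $\curlyvee$ is commutative and idempotent; $(a\curlyvee b)\sqcup(a\sqcup b)=a\sqcup b$; $a\sqcup(b\curlyvee c)=(a\sqcup b)\curlyvee(a\sqcup c)$; and for all $a,b,c,d$,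 if $d\lesssim a$, $d\lesssim b$, $d\lesssim c$, $d\lesssim a\curlyvee b$ and $d\lesssim b\curlyvee c$ then $d\lesssim a\curlyvee c$. A flat $\curlyvee$-algebra is an algebra $(S,\curlyvee)$ with an element $0\in S$ such that $a\curlyvee b=0$ whenever $a,b$ are distinct and both different from $0$, and $a\curlyvee a=a$, $a\curlyvee 0=0\curlyvee a=a$ for all $a\in S$. *)

Definition rel (X Y : Type) := X -> Y -> Prop.

Definition is_partial_function {X Y : Type} (f : rel X Y) : Prop :=
  forall x y y', f x y -> f x y' -> y = y'.

Definition dom {X Y : Type} (f : rel X Y) (x : X) : Prop := exists y, f x y.

Definition rel_minus {X Y : Type} (g f : rel X Y) : rel X Y :=
  fun x y => g x y /\ ~ dom f x.

Definition rel_inter {X Y : Type} (f g : rel X Y) : rel X Y :=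
  fun x y => f x y /\ g x y.

Definition rel_union {X Y : Type} (f g : rel X Y) : rel X Y :=
  fun x y => f x y \/ g x y.

Definition restricted_union {X Y : Type} (f g : rel X Y) : rel X Y :=
  rel_union (rel_union (rel_minus f g) (rel_inter f g)) (rel_minus g f).

Definition functional (S : Type) (op : S -> S -> S) : Prop :=
  exists (X Y : Type) (A : rel X Y -> Prop),
    (forall f, A f -> is_partial_function f) /\
    (forall f g, A f -> A g -> A (restricted_union f g)) /\
    exists h : S -> rel X Y,
      (forall a b, h a = h b -> a = b) /\
      (forall f, A f <-> exists a, h a = f) /\
      (forall a b, h (op a b) = restricted_union (h a) (h b)).

Definition sqcup {S : Type} (op : S -> S -> S) (a b : S) : S := op a (op a b).
Definition lesssim {S : Type} (op : S -> S -> S) (a b : S) : Prop :=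
  sqcup op b a = b.

Definition left_regular_band {S : Type} (m : S -> S -> S) : Prop :=
  (forall a b c, m a (m b c) = m (m a b) c) /\
  (forall a, m a a = a) /\
  (forall a b, m a b = m (m a b) a).

Definition vee_algebra (S : Type) (op : S -> S -> S) : Prop :=
  left_regular_band (sqcup op) /\
  (forall a b, op a b = op b a) /\
  (forall a, op a a = a) /\
  (forall a b, sqcup op (op a b) (sqcup op a b) = sqcup op a b) /\
  (forall a b c, sqcup op a (op b c) = op (sqcup op a b) (sqcup op a c)) /\
  (forall a b c d,
      lesssim op d a -> lesssim op d b -> lesssim op d c ->
      lesssim op d (op a b) -> lesssim op d (op b c) ->
      lesssim op d (op a c)).

Definition flat_vee_algebra (T : Type) (op : T -> T -> T) (z : T) : Prop :=
  (forall a b, a <> b -> a <> z -> b <> z -> op a b = z) /\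
  (forall a, op a a = a) /\
  (forall a, op a z = a /\ op z a = a).

Definition subdirect_product_of_flat (S : Type) (op : S -> S -> S) : Prop :=
  exists (I : Type) (T : I -> Type) (opT : forall i, T i -> T i -> T i)
         (z : forall i, T i),
    (forall i, flat_vee_algebra (T i) (opT i) (z i)) /\
    exists B : (forall i, T i) -> Prop,
      (forall p q, B p -> B q -> B (fun i => opT i (p i) (q i))) /\
      (forall i (t : T i), exists p, B p /\ p i = t) /\
      exists h : S -> forall i, T i,
        (forall a b, h a = h b -> a = b) /\
        (forall p, B p <-> exists a, h a = p) /\
        (forall a b, h (op a b) = (fun i => opT i (h a i) (h b i))).

(* A ⋎-algebra is functional iff it is separated by homomorphisms into flat algebras
   [option Q] (with [None] as zero): evaluation at a point of a representation by partial
   functions gives such a homomorphism, and conversely the graphs of a separating family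
   form a representation.  Taking images of these homomorphisms gives subdirect products
   of flat algebras, and flat algebras satisfy the ⋎-algebra axioms, which are
   quasi-identities and hence survive in separated subalgebras of products.
   For the converse, given [a <> b] one of [a ≲ b], [b ≲ a], [a ≲ a ⋎ b] (or a symmetric
   one) fails, say [~ u ≲ c].  Zorn's lemma gives an ideal [J] (a ≲-down-set closed under ⋎)
   containing [c], maximal for avoiding [u]; by maximality [u] lies in the ideal generated
   by [J] and any [w ∉ J], and the last axiom then makes [x ⋎ y ∉ J] an equivalence on the
   complement of [J].  Sending [J] to zero and every other element to its class is a
   homomorphism onto a flat algebra that separates [a] from [b]. *)

From Stdlib Require Import Classical FunctionalExtensionality PropExtensionality
  ClassicalEpsilon ProofIrrelevance List.
From mathcomp Require classical_sets.
Import ListNotations.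

Definition option_vee {Q : Type} (p q : option Q) : option Q :=
  match p, q with
  | None, _ => q
  | _, None => p
  | Some x, Some y => if excluded_middle_informative (x = y) then p else None
  end.

Lemma option_vee_flat (Q : Type) : flat_vee_algebra (option Q) option_vee None.
Proof.
  split; [|split].
  - intros [x|] [y|] nxy nx ny; try congruence.
    simpl; destruct (excluded_middle_informative (x = y)); congruence.
  - intros [x|]; simpl; [destruct (excluded_middle_informative (x = x))|]; congruence.
  - intros [x|]; split; reflexivity.
Qed.

Definition graph {X Y : Type} (f : X -> option Y) : rel X Y := fun x y => f x = Some y.

Lemma graph_partial {X Y : Type} (f : X -> option Y) : is_partial_function (graph f).
Proof. intros x y y' E E'; unfold graph in *; congruence. Qed.

Lemma graph_inj {X Y : Type} (f g : X -> option Y) : graph f = graph g -> f = g.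
Proof.
  intro E; apply functional_extensionality; intro x.
  assert (Efg : forall y, f x = Some y <-> g x = Some y)
    by (intro y; change (graph f x y <-> graph g x y); rewrite E; reflexivity).
  destruct (f x) as [y|]; [symmetry; apply Efg; reflexivity|].
  destruct (g x) as [y|]; [apply Efg|]; reflexivity.
Qed.

Lemma restricted_union_graph {X Y : Type} (f g : X -> option Y) :
  restricted_union (graph f) (graph g) = graph (fun x => option_vee (f x) (g x)).
Proof.
  apply functional_extensionality; intro x; apply functional_extensionality; intro y.
  apply propositional_extensionality.
  unfold restricted_union, rel_union, rel_minus, rel_inter, dom, graph.
  destruct (f x) as [u|], (g x) as [v|]; simpl;
    [destruct (excluded_middle_informative (u = v))| | |];
    firstorder congruence.
Qed.

Definition value {X Y : Type} (f : rel X Y) (x : X) : option Y :=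
  match excluded_middle_informative (dom f x) with
  | left H => Some (proj1_sig (constructive_indefinite_description _ H))
  | right _ => None
  end.

Lemma graph_value {X Y : Type} (f : rel X Y) :
  is_partial_function f -> graph (value f) = f.
Proof.
  intro pf; apply functional_extensionality; intro x; apply functional_extensionality; intro y.
  apply propositional_extensionality; unfold graph, value.
  destruct (excluded_middle_informative (dom f x)) as [H|H].
  - destruct (constructive_indefinite_description _ H) as [y0 Hy0]; simpl.
    split; [intro E; injection E as <-; exact Hy0|intro Hy; f_equal; exact (pf _ _ _ Hy0 Hy)].
  - split; [discriminate|intro Hy; contradiction (H (ex_intro _ y Hy))].
Qed.

Lemma restricted_union_partial {X Y : Type} (f g : rel X Y) :
  is_partial_function f -> is_partial_function g ->
  is_partial_function (restricted_union f g).
Proof.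
  intros pf pg; rewrite <- (graph_value f pf), <- (graph_value g pg), restricted_union_graph.
  apply graph_partial.
Qed.

Lemma value_restricted_union {X Y : Type} (f g : rel X Y) :
  is_partial_function f -> is_partial_function g ->
  value (restricted_union f g) = fun x => option_vee (value f x) (value g x).
Proof.
  intros pf pg; apply graph_inj.
  rewrite <- restricted_union_graph, !graph_value; auto using restricted_union_partial.
Qed.

Definition option_hom {S Q : Type} (op : S -> S -> S) (phi : S -> option Q) : Prop :=
  forall a b, phi (op a b) = option_vee (phi a) (phi b).

Definition option_separated (S : Type) (op : S -> S -> S) : Prop :=
  exists (I Q : Type) (phi : I -> S -> option Q),
    (forall i, option_hom op (phi i)) /\
    (forall a b, (forall i, phi i a = phi i b) -> a = b).

Lemma option_hom_attains_none {S Q : Type} (op : S -> S -> S) (phi : S -> option Q) a b :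
  option_hom op phi -> phi a <> phi b -> exists c, phi c = None.
Proof.
  intro hom; destruct (phi a) as [x|] eqn:Ea; [|eauto].
  destruct (phi b) as [y|] eqn:Eb; [|eauto].
  intro nxy; exists (op a b); rewrite hom, Ea, Eb; simpl.
  destruct (excluded_middle_informative (x = y)); congruence.
Qed.

Lemma functional_option_separated (S : Type) (op : S -> S -> S) :
  functional S op -> option_separated S op.
Proof.
  intros [X [Y [A [Apf [_ [h [hinj [hA hhom]]]]]]]].
  assert (pf : forall a, is_partial_function (h a)) by (intro a; apply Apf, hA; eauto).
  exists X, Y, (fun x a => value (h a) x); split.
  - intros x a b; rewrite hhom, value_restricted_union; auto.
  - intros a b E; apply hinj.
    rewrite <- (graph_value (h a)), <- (graph_value (h b)); auto.
    f_equal; apply functional_extensionality, E.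
Qed.

Lemma option_separated_functional (S : Type) (op : S -> S -> S) :
  option_separated S op -> functional S op.
Proof.
  intros [I [Q [phi [hom sep]]]].
  set (h := fun a => graph (fun i => phi i a)).
  assert (hh : forall a b, h (op a b) = restricted_union (h a) (h b)).
  { intros a b; unfold h; rewrite restricted_union_graph; f_equal.
    apply functional_extensionality; intro i; apply hom. }
  exists I, Q, (fun f => exists a, h a = f); split; [|split].
  - intros f [a <-]; apply graph_partial.
  - intros f g [a <-] [b <-]; exists (op a b); apply hh.
  - exists h; split; [|split; [reflexivity|exact hh]].
    intros a b E; apply sep, equal_f, graph_inj, E.
Qed.

Section FlatSubalgebra.

Variables (T : Type) (o : T -> T -> T) (z : T) (P : T -> Prop).
Hypotheses (P_op : forall s t, P s -> P t -> P (o s t)) (P_z : P z).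

Definition sub_op (p q : sig P) : sig P :=
  exist P (o (proj1_sig p) (proj1_sig q)) (P_op _ _ (proj2_sig p) (proj2_sig q)).

Lemma flat_vee_algebra_sub :
  flat_vee_algebra T o z -> flat_vee_algebra (sig P) sub_op (exist P z P_z).
Proof.
  intros [F1 [F2 F3]]; split; [|split].
  - intros [a Ha] [b Hb] nab na nb; apply subset_eq_compat, F1; intro E;
      [apply nab|apply na|apply nb]; apply subset_eq_compat, E.
  - intros [a Ha]; apply subset_eq_compat, F2.
  - intros [a Ha]; split; apply subset_eq_compat, F3.
Qed.

End FlatSubalgebra.

(* Only the coordinates whose image contains the zero [None] are kept: the others are constant. *)
Lemma option_separated_subdirect (S : Type) (op : S -> S -> S) :
  option_separated S op -> subdirect_product_of_flat S op.
Proof.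
  intros [I [Q [phi [hom sep]]]].
  set (J := {i : I | exists c, phi i c = None}).
  set (P := fun (j : J) t => exists a, phi (proj1_sig j) a = t).
  assert (P_op : forall j s t, P j s -> P j t -> P j (option_vee s t)).
  { intros j s t [a <-] [b <-]; exists (op a b); apply hom. }
  exists J, (fun j => sig (P j)), (fun j => sub_op _ option_vee (P j) (P_op j)),
    (fun j => exist (P j) None (proj2_sig j)); split.
  { intro j; apply flat_vee_algebra_sub, option_vee_flat. }
  set (h := fun a (j : J) => exist (P j) (phi (proj1_sig j) a) (ex_intro _ a eq_refl)).
  assert (hh : forall a b, h (op a b) = fun j => sub_op _ option_vee (P j) (P_op j) (h a j) (h b j)).
  { intros a b; apply functional_extensionality_dep; intro j; apply subset_eq_compat, hom. }
  exists (fun p => exists a, h a = p); split; [|split].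
  - intros p q [a <-] [b <-]; exists (op a b); apply hh.
  - intros j [t [a Ha]]; exists (h a); split; [eauto|apply subset_eq_compat, Ha].
  - exists h; split; [|split; [reflexivity|exact hh]].
    intros a b E; apply sep; intro i; apply NNPP; intro nab.
    destruct (option_hom_attains_none op (phi i) a b (hom i) nab) as [c Hc].
    apply nab; exact (f_equal (fun p => proj1_sig (p (exist _ i (ex_intro _ c Hc)))) E).
Qed.

Section LeftRegularBand.

Context {S : Type} {m : S -> S -> S} (L : left_regular_band m).

Local Notation "a ≼ b" := (m b a = b) (at level 70).

Lemma lrb_assoc a b c : m a (m b c) = m (m a b) c.
Proof. apply L. Qed.

Lemma lrb_idem a : m a a = a.
Proof. apply L. Qed.

Lemma lrb_regular a b : m a b = m (m a b) a.
Proof. apply L. Qed.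

Lemma lrb_le_trans a b c : a ≼ b -> b ≼ c -> a ≼ c.
Proof. intros Hab Hbc; rewrite <- Hbc, <- lrb_assoc, Hab; reflexivity. Qed.

Lemma lrb_le_l a b : a ≼ m a b.
Proof. symmetry; apply lrb_regular. Qed.

Lemma lrb_le_r a b : b ≼ m a b.
Proof. rewrite <- lrb_assoc, lrb_idem; reflexivity. Qed.

Lemma lrb_join_le a b c : a ≼ c -> b ≼ c -> m a b ≼ c.
Proof. intros Hac Hbc; rewrite lrb_assoc, Hac, Hbc; reflexivity. Qed.

Lemma lrb_le_of_absorb a b : m a b = b -> a ≼ b.
Proof. intro E; rewrite <- E at 1; rewrite <- lrb_regular; exact E. Qed.

Lemma lrb_le_mono a a' b b' : a ≼ a' -> b ≼ b' -> m a b ≼ m a' b'.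
Proof.
  intros Ha Hb; apply lrb_join_le.
  - apply lrb_le_trans with a'; [exact Ha|apply lrb_le_l].
  - apply lrb_le_trans with b'; [exact Hb|apply lrb_le_r].
Qed.

End LeftRegularBand.

Section VeeAxioms.

Context {S : Type} {op : S -> S -> S} (V : vee_algebra S op).

Lemma vee_lrb : left_regular_band (sqcup op).
Proof. apply V. Qed.

Lemma vee_comm a b : op a b = op b a.
Proof. apply V. Qed.

Lemma vee_idem a : op a a = a.
Proof. apply V. Qed.

Lemma vee_sqcup_absorb a b : sqcup op (op a b) (sqcup op a b) = sqcup op a b.
Proof. apply V. Qed.

Lemma vee_sqcup_distr a b c : sqcup op a (op b c) = op (sqcup op a b) (sqcup op a c).
Proof. apply V. Qed.

Lemma vee_quasi a b c d :
  lesssim op d a -> lesssim op d b -> lesssim op d c ->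
  lesssim op d (op a b) -> lesssim op d (op b c) -> lesssim op d (op a c).
Proof. apply V. Qed.

End VeeAxioms.

Lemma vee_algebra_of_separating_homs (S I : Type) (op : S -> S -> S)
  (T : I -> Type) (o : forall i, T i -> T i -> T i) (h : forall i, S -> T i) :
  (forall i, vee_algebra (T i) (o i)) ->
  (forall i a b, h i (op a b) = o i (h i a) (h i b)) ->
  (forall a b, (forall i, h i a = h i b) -> a = b) ->
  vee_algebra S op.
Proof.
  intros V hom sep.
  assert (hsq : forall i a b, h i (sqcup op a b) = sqcup (o i) (h i a) (h i b))
    by (intros; unfold sqcup; rewrite !hom; reflexivity).
  assert (hle : forall a b, lesssim op a b <-> forall i, lesssim (o i) (h i a) (h i b)).
  { intros a b; unfold lesssim; split.
    - intros E i; rewrite <- hsq, E; reflexivity.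
    - intro E; apply sep; intro i; rewrite hsq; apply E. }
  split; [split; [|split]|split; [|split; [|split; [|split]]]].
  - intros a b c; apply sep; intro i; rewrite !hsq; apply (lrb_assoc (vee_lrb (V i))).
  - intros a; apply sep; intro i; rewrite !hsq; apply (lrb_idem (vee_lrb (V i))).
  - intros a b; apply sep; intro i; rewrite !hsq; apply (lrb_regular (vee_lrb (V i))).
  - intros a b; apply sep; intro i; rewrite !hom; apply (vee_comm (V i)).
  - intros a; apply sep; intro i; rewrite !hom; apply (vee_idem (V i)).
  - intros a b; apply sep; intro i; rewrite !hsq, !hom; apply (vee_sqcup_absorb (V i)).
  - intros a b c; apply sep; intro i; rewrite !hsq, !hom, !hsq; apply (vee_sqcup_distr (V i)).
  - intros a b c d; rewrite !hle; intros Ha Hb Hc Hab Hbc i.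
    specialize (Hab i); specialize (Hbc i); rewrite hom in Hab, Hbc |- *.
    exact (vee_quasi (V i) _ (h i b) _ _ (Ha i) (Hb i) (Hc i) Hab Hbc).
Qed.

Section FlatVeeAlgebra.

Context {T : Type} {o : T -> T -> T} {z : T} (F : flat_vee_algebra T o z).

Lemma flat_op_distinct a b : a <> b -> a <> z -> b <> z -> o a b = z.
Proof. apply F. Qed.

Lemma flat_idem a : o a a = a.
Proof. apply F. Qed.

Lemma flat_zero_r a : o a z = a.
Proof. apply F. Qed.

Lemma flat_zero_l a : o z a = a.
Proof. apply F. Qed.

Lemma flat_eq_of_op_nz a b : o a b <> z -> a <> z -> b <> z -> a = b.
Proof. intros nab na nb; apply NNPP; intro E; exact (nab (flat_op_distinct a b E na nb)). Qed.

Lemma flat_sqcup_zero a : sqcup o z a = a.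
Proof. unfold sqcup; rewrite !flat_zero_l; reflexivity. Qed.

Lemma flat_sqcup_nz a b : a <> z -> sqcup o a b = a.
Proof.
  intro na; unfold sqcup.
  destruct (classic (b = z)) as [Eb|nb]; [rewrite Eb, flat_zero_r; apply flat_idem|].
  destruct (classic (a = b)) as [<-|nab]; [rewrite !flat_idem; reflexivity|].
  rewrite (flat_op_distinct a b), flat_zero_r; auto.
Qed.

Lemma flat_comm a b : o a b = o b a.
Proof.
  destruct (classic (a = z)) as [Ea|na]; [rewrite Ea, flat_zero_l, flat_zero_r; reflexivity|].
  destruct (classic (b = z)) as [Eb|nb]; [rewrite Eb, flat_zero_l, flat_zero_r; reflexivity|].
  destruct (classic (a = b)) as [<-|nab]; [reflexivity|].
  rewrite !flat_op_distinct; auto.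
Qed.

Lemma flat_op_nz_sqcup a b : o a b <> z -> o a b = sqcup o a b.
Proof.
  intro nab; destruct (classic (a = z)) as [Ea|na]; [rewrite Ea, flat_sqcup_zero; apply flat_zero_l|].
  rewrite flat_sqcup_nz by exact na.
  destruct (classic (b = z)) as [Eb|nb]; [rewrite Eb; apply flat_zero_r|].
  rewrite <- (flat_eq_of_op_nz a b nab na nb); apply flat_idem.
Qed.

Lemma flat_lesssim d a : lesssim o d a <-> (a = z -> d = z).
Proof.
  unfold lesssim; destruct (classic (a = z)) as [Ea|na].
  - rewrite Ea, flat_sqcup_zero; split; auto.
  - rewrite flat_sqcup_nz by exact na; split; [intros _ E; contradiction|reflexivity].
Qed.

Lemma flat_quasi a b c d :
  lesssim o d a -> lesssim o d b -> lesssim o d c ->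
  lesssim o d (o a b) -> lesssim o d (o b c) -> lesssim o d (o a c).
Proof.
  rewrite !flat_lesssim; intros Ha Hb Hc Hab Hbc Eac.
  apply NNPP; intro nd.
  assert (nz : forall x, (x = z -> d = z) -> x <> z) by (intros x Hx Ex; exact (nd (Hx Ex))).
  assert (Eab := flat_eq_of_op_nz a b (nz _ Hab) (nz _ Ha) (nz _ Hb)).
  assert (Ebc := flat_eq_of_op_nz b c (nz _ Hbc) (nz _ Hb) (nz _ Hc)).
  subst b c; rewrite flat_idem in Eac; exact (nz _ Ha Eac).
Qed.

Lemma flat_vee_algebra_vee : vee_algebra T o.
Proof.
  split; [split; [|split]|split; [|split; [|split; [|split]]]].
  - intros a b c; destruct (classic (a = z)) as [Ea|na].
    + rewrite Ea, !flat_sqcup_zero; reflexivity.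
    + rewrite !(flat_sqcup_nz a) by exact na; reflexivity.
  - intro a; unfold sqcup; rewrite !flat_idem; reflexivity.
  - intros a b; destruct (classic (a = z)) as [Ea|na]; [|rewrite !flat_sqcup_nz; auto].
    rewrite Ea, flat_sqcup_zero; destruct (classic (b = z)) as [Eb|nb].
    + rewrite Eb, flat_sqcup_zero; reflexivity.
    + rewrite flat_sqcup_nz; auto.
  - exact flat_comm.
  - exact flat_idem.
  - intros a b; destruct (classic (o a b = z)) as [E|E].
    + rewrite E; apply flat_sqcup_zero.
    + rewrite flat_sqcup_nz by exact E; apply flat_op_nz_sqcup, E.
  - intros a b c; destruct (classic (a = z)) as [Ea|na].
    + rewrite Ea, !flat_sqcup_zero; reflexivity.
    + rewrite !(flat_sqcup_nz a), flat_idem by exact na; reflexivity.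
  - exact flat_quasi.
Qed.

End FlatVeeAlgebra.

Lemma option_separated_vee (S : Type) (op : S -> S -> S) :
  option_separated S op -> vee_algebra S op.
Proof.
  intros [I [Q [phi [hom sep]]]].
  apply (vee_algebra_of_separating_homs S I op (fun _ => option Q) (fun _ => option_vee) phi);
    [intros _; exact (flat_vee_algebra_vee (option_vee_flat Q))|exact hom|exact sep].
Qed.

Lemma subdirect_vee (S : Type) (op : S -> S -> S) :
  subdirect_product_of_flat S op -> vee_algebra S op.
Proof.
  intros [I [T [o [z [F [_ [_ [_ [h [hinj [_ hhom]]]]]]]]]]].
  apply (vee_algebra_of_separating_homs S I op T o (fun i a => h a i)).
  - intro i; exact (flat_vee_algebra_vee (F i)).
  - intros i a b; rewrite hhom; reflexivity.
  - intros a b E; apply hinj, functional_extensionality_dep, E.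
Qed.

Lemma zorn_pred (T : Type) (P : (T -> Prop) -> Prop) :
  (forall F : (T -> Prop) -> Prop, (forall K, F K -> P K) ->
     (forall K K', F K -> F K' -> (forall t, K t -> K' t) \/ (forall t, K' t -> K t)) ->
     P (fun t => exists2 K, F K & K t)) ->
  exists A, P A /\ forall B, (forall t, A t -> B t) -> P B -> forall t, B t -> A t.
Proof.
  intro H; destruct (@classical_sets.Zorn_bigcup T P H) as [A [PA maxA]].
  exists A; split; [exact PA|]; intros B AB PB t Bt.
  apply NNPP; intro nAt; apply (maxA B); [split; [exact AB|intro BA; exact (nAt (BA t Bt))]|exact PB].
Qed.

Section VeeAlgebra.

Context {S : Type} {op : S -> S -> S} (V : vee_algebra S op).

Local Notation "a ⋎ b" := (op a b) (at level 40, left associativity).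
Local Notation "a ⊔ b" := (sqcup op a b) (at level 40, left associativity).
Local Notation "a ≲ b" := (lesssim op a b) (at level 70).
Local Notation lrb := (vee_lrb V).

Lemma lesssim_refl a : a ≲ a.
Proof. apply (lrb_idem lrb). Qed.

Lemma lesssim_sqcup_mono_l j j' w : j ≲ j' -> j ⊔ w ≲ j' ⊔ w.
Proof. intro H; apply (lrb_le_mono lrb); [exact H|apply lesssim_refl]. Qed.

Lemma vee_lesssim_sqcup a b : a ⋎ b ≲ a ⊔ b.
Proof. apply (lrb_le_of_absorb lrb), (vee_sqcup_absorb V). Qed.

Lemma lesssim_vee_sqcup x y : x ≲ (x ⋎ y) ⊔ y.
Proof.
  apply (lrb_le_trans lrb) with (y ⊔ x); [apply (lrb_le_r lrb)|].
  replace (y ⊔ x) with ((x ⋎ y) ⋎ y); [apply vee_lesssim_sqcup|].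
  unfold sqcup; rewrite (vee_comm V (x ⋎ y)), (vee_comm V x); reflexivity.
Qed.

Lemma vee_eq_of_lesssim a b : a ≲ b -> b ≲ a -> a ≲ a ⋎ b -> a = b.
Proof.
  unfold lesssim, sqcup; intros Hab Hba Haab.
  assert (Eba : (a ⋎ b) ⋎ a = a) by (rewrite (vee_comm V); exact Hba).
  assert (Eab : a ⋎ b = a) by (rewrite Eba, Eba in Haab; symmetry; exact Haab).
  rewrite (vee_comm V b a), Eab, (vee_comm V b a), Eab in Hab; exact Hab.
Qed.

Record ideal (J : S -> Prop) : Prop := {
  ideal_down : forall d j, d ≲ j -> J j -> J d;
  ideal_vee : forall x y, J x -> J y -> J (x ⋎ y)
}.

Lemma ideal_sqcup J x y : ideal J -> J x -> J y -> J (x ⊔ y).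
Proof. intros IJ Jx Jy; apply (ideal_vee J IJ); auto; apply (ideal_vee J IJ); auto. Qed.

Lemma ideal_vee_out J x y : ideal J -> ~ J x -> J y -> ~ J (x ⋎ y).
Proof.
  intros IJ nx Jy Jxy; apply nx, (ideal_down J IJ x ((x ⋎ y) ⊔ y)).
  - apply lesssim_vee_sqcup.
  - apply ideal_sqcup; auto.
Qed.

Lemma down_ideal c : ideal (fun s => s ≲ c).
Proof.
  split.
  - intros d j; apply (lrb_le_trans lrb).
  - intros x y Hx Hy; apply (lrb_le_trans lrb) with (x ⊔ y);
      [apply vee_lesssim_sqcup|apply (lrb_join_le lrb); assumption].
Qed.

Lemma ideal_ext J K : (forall s, J s <-> K s) -> ideal J -> ideal K.
Proof.
  intros E [down vee]; split; intros; apply E;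
    [eapply down; eauto; apply E|apply vee; apply E]; assumption.
Qed.

Lemma ideal_union_chain (F : (S -> Prop) -> Prop) (D : S -> Prop) :
  ideal D -> (forall K, F K -> ideal (fun s => K s \/ D s)) ->
  (forall K K', F K -> F K' -> (forall t, K t -> K' t) \/ (forall t, K' t -> K t)) ->
  ideal (fun s => (exists2 K, F K & K s) \/ D s).
Proof.
  intros ID IF chain.
  assert (lift : forall K s, F K -> K s \/ D s -> (exists2 K, F K & K s) \/ D s)
    by (intros K s FK [Ks|Ds]; [left; exists K|right]; assumption).
  split.
  - intros d j Hdj [[K FK Kj]|Dj].
    + exact (lift K d FK (ideal_down _ (IF K FK) d j Hdj (or_introl Kj))).
    + right; exact (ideal_down D ID d j Hdj Dj).
  - intros x y [[K FK Kx]|Dx] [[K' FK' K'y]|Dy].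
    + destruct (chain K K' FK FK') as [sub|sub].
      * exact (lift K' _ FK' (ideal_vee _ (IF K' FK') x y (or_introl (sub x Kx)) (or_introl K'y))).
      * exact (lift K _ FK (ideal_vee _ (IF K FK) x y (or_introl Kx) (or_introl (sub y K'y)))).
    + exact (lift K _ FK (ideal_vee _ (IF K FK) x y (or_introl Kx) (or_intror Dy))).
    + exact (lift K' _ FK' (ideal_vee _ (IF K' FK') x y (or_intror Dx) (or_introl K'y))).
    + right; exact (ideal_vee D ID x y Dx Dy).
Qed.

Definition adjoin (J : S -> Prop) (w : S) : S -> Prop := fun d => exists2 j, J j & d ≲ j ⊔ w.

Lemma adjoin_ideal J w : ideal J -> ideal (adjoin J w).
Proof.
  intro IJ; split.
  - intros d d' Hd [j Jj Hj]; exists j; [exact Jj|]; apply (lrb_le_trans lrb) with d'; assumption.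
  - intros x y [j1 J1 H1] [j2 J2 H2]; exists (j1 ⊔ j2); [apply ideal_sqcup; assumption|].
    apply (lrb_le_trans lrb) with (x ⊔ y); [apply vee_lesssim_sqcup|apply (lrb_join_le lrb)].
    + apply (lrb_le_trans lrb) with (j1 ⊔ w); [exact H1|apply lesssim_sqcup_mono_l, (lrb_le_l lrb)].
    + apply (lrb_le_trans lrb) with (j2 ⊔ w); [exact H2|apply lesssim_sqcup_mono_l, (lrb_le_r lrb)].
Qed.

Lemma adjoin_sub J w s : J s -> adjoin J w s.
Proof. intro Js; exists s; [exact Js|apply (lrb_le_l lrb)]. Qed.

Lemma adjoin_mem J w c : J c -> adjoin J w w.
Proof. intro Jc; exists c; [exact Jc|apply (lrb_le_r lrb)]. Qed.

Lemma adjoin_common J c u (ws : list S) :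
  ideal J -> J c -> (forall w, In w ws -> adjoin J w u) ->
  exists2 j, J j & forall w, In w ws -> u ≲ j ⊔ w.
Proof.
  intros IJ Jc; induction ws as [|w ws IH]; intro H.
  - exists c; [exact Jc|intros w []].
  - destruct (H w (or_introl eq_refl)) as [j1 J1 H1].
    destruct IH as [j2 J2 H2]; [intros w' Hw'; apply H; right; exact Hw'|].
    exists (j1 ⊔ j2); [apply ideal_sqcup; assumption|]; intros w' [<-|Hw'].
    + apply (lrb_le_trans lrb) with (j1 ⊔ w); [exact H1|apply lesssim_sqcup_mono_l, (lrb_le_l lrb)].
    + apply (lrb_le_trans lrb) with (j2 ⊔ w'); [exact (H2 w' Hw')|apply lesssim_sqcup_mono_l, (lrb_le_r lrb)].
Qed.

(* Zorn is applied to the sets [K] with [K ∪ ↓c] an ideal avoiding [u]; adding [↓c]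
   keeps the union of the empty chain admissible. *)
Lemma exists_maximal_ideal u c : ~ u ≲ c ->
  exists J, ideal J /\ J c /\ ~ J u /\ forall w, ~ J w -> adjoin J w u.
Proof.
  intro nuc.
  set (D := fun s => s ≲ c).
  set (P := fun K : S -> Prop => ideal (fun s => K s \/ D s) /\ ~ (K u \/ D u)).
  destruct (zorn_pred S P) as [A [[IA nA] maxA]].
  - intros F FP chain; split.
    + apply ideal_union_chain; [apply down_ideal|intros K FK; apply FP, FK|exact chain].
    + intros [[K FK Ku]|Du]; [exact (proj2 (FP K FK) (or_introl Ku))|exact (nuc Du)].
  - set (J := fun s => A s \/ D s).
    exists J; split; [exact IA|split; [right; apply lesssim_refl|split; [exact nA|]]].
    intros w nw; apply NNPP; intro nu; apply nw; left.
    apply (maxA (adjoin J w));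
      [intros t At; apply adjoin_sub; left; exact At| |apply adjoin_mem with c; right; apply lesssim_refl].
    split.
    + apply ideal_ext with (adjoin J w); [|apply adjoin_ideal, IA].
      intro s; split; [intro H; left; exact H|intros [H|H]; [exact H|apply adjoin_sub; right; exact H]].
    + intros [H|H]; [exact (nu H)|exact (nuc H)].
Qed.

Lemma maximal_ideal_trans J c u :
  ideal J -> J c -> ~ J u -> (forall w, ~ J w -> adjoin J w u) ->
  forall x y z, ~ J x -> ~ J y -> ~ J z -> ~ J (x ⋎ y) -> ~ J (y ⋎ z) -> ~ J (x ⋎ z).
Proof.
  intros IJ Jc nu M x y z nx ny nz nxy nyz Jxz.
  destruct (adjoin_common J c u [x; y; z; x ⋎ y; y ⋎ z] IJ Jc) as [j Jj Hj].
  { intros w Hw; apply M; simpl in Hw; intuition congruence. }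
  apply nu, (ideal_down J IJ u (j ⊔ (x ⋎ z))); [|apply ideal_sqcup; assumption].
  (* [j ⊔ _] is a ⋎-homomorphism, so the last axiom applies to [j ⊔ x], [j ⊔ y], [j ⊔ z]. *)
  rewrite (vee_sqcup_distr V); apply (vee_quasi V) with (j ⊔ y);
    rewrite <- ?(vee_sqcup_distr V); apply Hj; simpl; tauto.
Qed.

Record flat_ideal (J : S -> Prop) : Prop := {
  flat_ideal_ideal : ideal J;
  flat_ideal_trans : forall x y z,
    ~ J x -> ~ J y -> ~ J z -> ~ J (x ⋎ y) -> ~ J (y ⋎ z) -> ~ J (x ⋎ z)
}.

Lemma exists_flat_ideal u c : ~ u ≲ c -> exists J, flat_ideal J /\ J c /\ ~ J u.
Proof.
  intro nuc; destruct (exists_maximal_ideal u c nuc) as [J [IJ [Jc [nu M]]]].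
  exists J; split; [split; [exact IJ|exact (maximal_ideal_trans J c u IJ Jc nu M)]|auto].
Qed.

Definition vee_class (J : S -> Prop) (x : S) : S -> Prop := fun y => ~ J y /\ ~ J (x ⋎ y).

Definition flat_quotient (J : S -> Prop) (x : S) : option (S -> Prop) :=
  if excluded_middle_informative (J x) then None else Some (vee_class J x).

Lemma vee_class_eq J x y :
  flat_ideal J -> ~ J x -> ~ J y -> ~ J (x ⋎ y) -> vee_class J x = vee_class J y.
Proof.
  intros [_ trans] nx ny nxy; apply functional_extensionality; intro c.
  apply propositional_extensionality; unfold vee_class; split; intros [nc H]; split; auto.
  - apply (trans y x c); auto; rewrite (vee_comm V); exact nxy.
  - apply (trans x y c); auto.
Qed.

Lemma vee_class_neq J x y : ~ J y -> J (x ⋎ y) -> vee_class J x <> vee_class J y.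
Proof.
  intros ny Jxy E; assert (Hy : vee_class J y y) by (split; rewrite ?(vee_idem V); exact ny).
  rewrite <- E in Hy; exact (proj2 Hy Jxy).
Qed.

Lemma vee_class_vee J x y :
  flat_ideal J -> ~ J x -> ~ J (x ⋎ y) -> vee_class J (x ⋎ y) = vee_class J x.
Proof.
  intros FJ nx nxy; symmetry; apply vee_class_eq; auto.
  intro H; apply nx, (ideal_down J (flat_ideal_ideal J FJ) x (x ⊔ y)); [apply (lrb_le_l lrb)|exact H].
Qed.

Lemma flat_quotient_hom J : flat_ideal J -> option_hom op (flat_quotient J).
Proof.
  intros FJ a b; pose proof (flat_ideal_ideal J FJ) as IJ; unfold flat_quotient.
  destruct (excluded_middle_informative (J a)) as [Ja|na],
    (excluded_middle_informative (J b)) as [Jb|nb],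
    (excluded_middle_informative (J (a ⋎ b))) as [Jab|nab]; simpl.
  - reflexivity.
  - contradiction (nab (ideal_vee J IJ a b Ja Jb)).
  - rewrite (vee_comm V) in Jab; contradiction (ideal_vee_out J b a IJ nb Ja Jab).
  - rewrite (vee_comm V) in nab |- *; rewrite vee_class_vee; auto.
  - contradiction (ideal_vee_out J a b IJ na Jb Jab).
  - rewrite vee_class_vee; auto.
  - destruct (excluded_middle_informative (vee_class J a = vee_class J b)) as [E|E];
      [contradiction (vee_class_neq J a b nb Jab E)|reflexivity].
  - destruct (excluded_middle_informative (vee_class J a = vee_class J b)) as [E|E].
    + rewrite vee_class_vee; auto.
    + contradiction (E (vee_class_eq J a b FJ na nb nab)).
Qed.

Lemma flat_quotient_separates J x y :
  ~ J x -> J y \/ J (x ⋎ y) -> flat_quotient J x <> flat_quotient J y.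
Proof.
  intros nx Hy; unfold flat_quotient.
  destruct (excluded_middle_informative (J x)) as [Jx|_]; [contradiction|].
  destruct (excluded_middle_informative (J y)) as [Jy|ny]; [discriminate|].
  destruct Hy as [Jy|Jxy]; [contradiction|].
  intro E; injection E; exact (vee_class_neq J x y ny Jxy).
Qed.

Lemma exists_separating_flat_ideal u v :
  ~ u ≲ v \/ ~ u ≲ u ⋎ v -> exists J, flat_ideal J /\ flat_quotient J u <> flat_quotient J v.
Proof.
  intros [H|H]; destruct (exists_flat_ideal _ _ H) as [J [FJ [Jc nu]]];
    exists J; split; auto; apply flat_quotient_separates; auto.
Qed.

Lemma vee_option_separated : option_separated S op.
Proof.
  exists {J : S -> Prop | flat_ideal J}, (S -> Prop), (fun J => flat_quotient (proj1_sig J)).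
  split; [intros [J FJ]; exact (flat_quotient_hom J FJ)|].
  intros a b E; apply NNPP; intro nab.
  assert (H : (~ a ≲ b \/ ~ a ≲ a ⋎ b) \/ (~ b ≲ a \/ ~ b ≲ b ⋎ a)).
  { apply NNPP; intro H; apply nab, vee_eq_of_lesssim; apply NNPP; intro; apply H; tauto. }
  destruct H as [H|H]; destruct (exists_separating_flat_ideal _ _ H) as [J [FJ sep]];
    apply sep; [|symmetry]; exact (E (exist _ J FJ)).
Qed.

End VeeAlgebra.

Theorem theorem4p7 (S : Type) (op : S -> S -> S) :
  (functional S op <-> vee_algebra S op) /\
  (vee_algebra S op <-> subdirect_product_of_flat S op).
Proof.
  split; split.
  - intro H; apply option_separated_vee, functional_option_separated, H.
  - intro V; apply option_separated_functional, (vee_option_separated V).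
  - intro V; apply option_separated_subdirect, (vee_option_separated V).
  - apply subdirect_vee.
Qed.
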